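(* Let $p$ be an odd prime and let $q\in\mathbb{C}_p$ satisfy $|1-q|_p<p^{-1/(p-1)}$. Then for every integer $n\ge 0$, $$\sum_{j=0}^{p-1}(-1)^j[j]_q^n\equiv \frac{2}{[2]_q}E_{n,q}\pmod{[p]_q},$$ i.e. $\left|\frac{2}{[2]_q}E_{n,q}-\sum_{j=0}^{p-1}(-1)^j[j]_q^n\right|_p\le |[p]_q|_p$.
   Context: $\mathbb{C}_p$ is the completion of an algebraic closure of $\mathbb{Q}_p$, with absolute value $|\cdot|_p$ normalized by $|p|_p=1/p$. For $x\in\mathbb{Z}_p$ put $[x]_q=\frac{1-q^x}{1-q}$ and $[x]_{-q}=\frac{1-(-q)^x}{1+q}$. For a function $f$ on $\mathbb{Z}_p$ the fermionic $p$-adic $q$-integral is $\int_{\mathbb{Z}_p}f(x)\,d\mu_{-q}(x)=\lim_{N\to\infty}\frac{1}{[p^N]_{-q}}\sum_{x=0}^{p^N-1}f(x)(-q)^x$. The $q$-Euler numbers are $E_{n,q}=\int_{\mathbb{Z}_p}[x]_q^n q^{-x}\,d\mu_{-q}(x)$; equivalently $\frac{2}{[2]_q}E_{n,q}=\lim_{N\to\infty}\sum_{x=0}^{p^N-1}(-1)^x[x]_q^n$. (They satisfy $E_{0,q}=[2]_q/2$ and $(qE+1)^n+E_{n,q}=[2]_q\delta_{0,n}$, with $E^k$ replaced by $E_{k,q}$ after expansion.) For $a,b,m\in\mathbb{C}_p$, $a\equiv b \pmod m$ means $|a-b|_p\le|m|_p$. *)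

From Stdlib Require Import Reals.
From HB Require Import structures.
From mathcomp Require Import all_boot all_order all_algebra.
Set Implicit Arguments. Unset Strict Implicit. Unset Printing Implicit Defensive.
Import GRing.Theory.
Local Open Scope ring_scope.

Definition is_ultra_abs (K : fieldType) (abs : K -> R) : Prop :=
  (forall x, Rle R0 (abs x)) /\
  (forall x, abs x = R0 <-> x = 0) /\
  (forall x y, abs (x * y) = Rmult (abs x) (abs y)) /\
  (forall x y, Rle (abs (x + y)) (Rmax (abs x) (abs y))).

Definition converges_to (K : fieldType) (abs : K -> R) (u : nat -> K) (l : K) : Prop :=
  forall eps : R, Rlt R0 eps ->
    exists N0 : nat, forall N : nat, (N0 <= N)%N -> Rlt (abs (u N - l)) eps.

Definition cauchy_seq (K : fieldType) (abs : K -> R) (u : nat -> K) : Prop :=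
  forall eps : R, Rlt R0 eps ->
    exists N0 : nat, forall m n : nat, (N0 <= m)%N -> (N0 <= n)%N ->
      Rlt (abs (u m - u n)) eps.

Definition algebraic_over_Q (K : fieldType) (x : K) : Prop :=
  exists P : {poly int}, P != 0 /\ root (map_poly intr P) x.

(* (K, abs) is (an isometric copy of) C_p: K is algebraically closed,
   abs is a nonarchimedean absolute value restricting to the normalized
   p-adic absolute value on the integers (|p| = 1/p), K is complete, and
   the elements algebraic over Q are dense (so K is the completion of an
   algebraic closure of Q_p). *)
Definition is_Cp (p : nat) (K : closedFieldType) (abs : K -> R) : Prop :=
  is_ultra_abs abs /\
  (forall n : nat, (0 < n)%N ->
     abs (n%:R) = pow (Rinv (INR p)) (logn p n)) /\
  (forall u : nat -> K, cauchy_seq abs u -> exists l, converges_to abs u l) /\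
  (forall (x : K) (eps : R), Rlt R0 eps ->
     exists y : K, algebraic_over_Q y /\ Rlt (abs (x - y)) eps).

Definition qint (K : fieldType) (q : K) (x : nat) : K :=
  if q == 1 then x%:R else (1 - q ^+ x) / (1 - q).

Definition qnint (K : fieldType) (q : K) (x : nat) : K :=
  (1 - (- q) ^+ x) / (1 + q).

(* Riemann sums of the fermionic p-adic q-integral:
   (1/[p^N]_{-q}) * sum_{x=0}^{p^N-1} f(x) (-q)^x. *)
Definition ferm_sum (K : fieldType) (p : nat) (q : K) (f : nat -> K) (N : nat) : K :=
  (qnint q (p ^ N))^-1 * \sum_(x < p ^ N) f x * (- q) ^+ x.

(* The integrand defining E_{n,q}: [x]_q^n q^{-x}. *)
Definition qeuler_integrand (K : fieldType) (q : K) (n : nat) (x : nat) : K :=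
  qint q x ^+ n * (q ^+ x)^-1.

From Stdlib Require Import Reals Lra.
From HB Require Import structures.
From mathcomp Require Import all_boot all_order all_algebra.
Import GRing.Theory.
Set Implicit Arguments. Unset Strict Implicit. Unset Printing Implicit Defensive.
Local Open Scope ring_scope.

(* Write [x]_q as the geometric sum qnum q x, F(k) = sum_{x<k} (-1)^x [x]_q^n,
   and s_N for the N-th Riemann sum of the fermionic q-integral defining E_(n,q);
   congruences x = y (mod m) mean |x - y| <= |m| for the ultrametric |.|.
   1. [x]_q is additive/multiplicative in the form [a + b c]_q =
      [a]_q + q^a [b]_q [c]_(q^b); hence, for odd b, F(m b) is congruent modulo
      [b]_q to F(b) or 0 according to the parity of m (alt_qsum_period).
   2. Newton's expansion of [p]_q in powers of q - 1 and p | C(p, i) give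
      |[p]_q| <= 1/p when |1 - q|^(p-1) < 1/p; the hypothesis is inherited by
      q^p, so |[p^N]_q| <= p^-N (abs_qnum_pN).
   3. Since p^N is odd, (2/[2]_q) s_N = 2/(1 + q^(p^N)) F(p^N), which is
      congruent to F(p^N) modulo [p^N]_q.  With step 1 this makes
      |s_(N+1) - s_N| <= p^-N, so (s_N) is Cauchy and converges to E_(n,q) by
      completeness, and (2/[2]_q) s_(N+1) = F(p) modulo [p]_q for every N.
   4. Congruence classes are closed, so the congruence passes to the limit. *)

Section RealFacts.
Local Open Scope R_scope.

Lemma pow_le1 x n : 0 <= x <= 1 -> x ^ n <= 1.
Proof. by move=> hx; rewrite -(pow1 n); apply: pow_incr; lra. Qed.

Lemma pow_le_base x n : 0 <= x <= 1 -> (0 < n)%N -> x ^ n <= x.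
Proof.
  case: n => [//|n] hx _ /=.
  have := pow_le1 n hx; have := pow_le x n (proj1 hx); nra.
Qed.

Lemma pow_lt_compat x y n : 0 <= x -> x < y -> (0 < n)%N -> x ^ n < y ^ n.
Proof.
  move=> hx hxy; elim: n => [//|[|n] IH] _; first by rewrite /= !Rmult_1_r.
  have IHn := IH isT; have := pow_le x n.+1 hx.
  move: IHn => /=; nra.
Qed.

Lemma le_of_le_max_eps a b : 0 <= b -> (forall e, 0 < e -> a <= Rmax e b) -> a <= b.
Proof.
  move=> hb h; case: (Rle_dec a b) => [//|/Rnot_le_lt hba].
  have := h ((a - b) / 2) ltac:(lra); rewrite /Rmax; case: Rle_dec; lra.
Qed.

End RealFacts.

Section Ultrametric.
Variables (K : fieldType) (abs : K -> R).
Hypothesis hU : is_ultra_abs abs.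

Lemma abs_ge0 x : Rle R0 (abs x). Proof. by case: hU. Qed.
Lemma abs_eq0 x : abs x = R0 <-> x = 0. Proof. by case: hU => _ []. Qed.
Lemma absM x y : abs (x * y) = Rmult (abs x) (abs y). Proof. by case: hU => _ [] _ []. Qed.
Lemma absD x y : Rle (abs (x + y)) (Rmax (abs x) (abs y)).
Proof. by case: hU => _ [] _ []. Qed.

Lemma abs0 : abs 0 = R0. Proof. exact/abs_eq0. Qed.

Lemma abs1 : abs 1 = R1.
Proof.
  have h := absM 1 1; rewrite mulr1 in h.
  have h1 : abs 1 <> R0 by move/abs_eq0/eqP; rewrite oner_eq0.
  have := abs_ge0 1; nra.
Qed.

Lemma absN x : abs (- x) = abs x.
Proof.
  have hN1 : abs (-1) = R1.
    have h := absM (-1) (-1); rewrite mulrNN mulr1 abs1 in h.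
    have := abs_ge0 (-1); nra.
  by rewrite -mulN1r absM hN1 Rmult_1_l.
Qed.

Lemma absB x y : abs (x - y) = abs (y - x). Proof. by rewrite -opprB absN. Qed.

Lemma absX x n : abs (x ^+ n) = pow (abs x) n.
Proof. by elim: n => [|n IH]; rewrite ?expr0 ?abs1 // exprS absM IH. Qed.

Lemma absV x : x != 0 -> abs (x^-1) = Rinv (abs x).
Proof.
  move=> hx; have h := absM x x^-1; rewrite mulfV // abs1 in h.
  have h1 : abs x <> R0 by move/abs_eq0/eqP; apply/negP.
  by field_simplify_eq; [lra | exact: h1].
Qed.

Lemma absD_le x y B : Rle (abs x) B -> Rle (abs y) B -> Rle (abs (x + y)) B.
Proof. by move=> hx hy; apply: Rle_trans (absD x y) _; apply: Rmax_lub. Qed.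

Lemma abs_sum_le (I : Type) (r : seq I) (P : pred I) (F : I -> K) (B : R) :
  Rle R0 B -> (forall i, P i -> Rle (abs (F i)) B) ->
  Rle (abs (\sum_(i <- r | P i) F i)) B.
Proof.
  move=> hB hF; apply: (big_ind (fun x => Rle (abs x) B)) => //.
  - by rewrite abs0.
  - move=> x y hx hy; exact: (absD_le hx hy).
Qed.

Definition vring (x : K) : Prop := Rle (abs x) R1.

Lemma vring1 : vring 1. Proof. by rewrite /vring abs1; lra. Qed.
Lemma vringN x : vring x -> vring (- x). Proof. by rewrite /vring absN. Qed.
Lemma vringN1 : vring (-1). Proof. exact/vringN/vring1. Qed.
Lemma vringD x y : vring x -> vring y -> vring (x + y).
Proof. by move=> hx hy; apply: absD_le. Qed.
Lemma vringM x y : vring x -> vring y -> vring (x * y).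
Proof. rewrite /vring absM => hx hy; have := abs_ge0 x; have := abs_ge0 y; nra. Qed.
Lemma vringX x n : vring x -> vring (x ^+ n).
Proof. by move=> hx; elim: n => [|n IH]; [exact: vring1 | rewrite exprS; exact: vringM]. Qed.
Lemma vring_sum (I : Type) (r : seq I) (P : pred I) (F : I -> K) :
  (forall i, P i -> vring (F i)) -> vring (\sum_(i <- r | P i) F i).
Proof. by apply: abs_sum_le; lra. Qed.

Lemma abs_mul_vring x y : vring y -> Rle (abs (x * y)) (abs x).
Proof. rewrite /vring absM => hy; have := abs_ge0 x; have := abs_ge0 y; nra. Qed.

Definition cong (m x y : K) : Prop := Rle (abs (x - y)) (abs m).

Lemma cong_refl m x : cong m x x.
Proof. by rewrite /cong subrr abs0; exact: abs_ge0. Qed.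

Lemma cong_sym m x y : cong m x y -> cong m y x.
Proof. by rewrite /cong absB. Qed.

Lemma cong_trans m x y z : cong m x y -> cong m y z -> cong m x z.
Proof. by move=> hxy hyz; rewrite /cong -(subrKA y); apply: absD_le. Qed.

Lemma congD m x x' y y' : cong m x x' -> cong m y y' -> cong m (x + y) (x' + y').
Proof. by move=> hx hy; rewrite /cong opprD addrACA; apply: absD_le. Qed.

Lemma cong_sum m (I : Type) (r : seq I) (P : pred I) (F G : I -> K) :
  (forall i, P i -> cong m (F i) (G i)) ->
  cong m (\sum_(i <- r | P i) F i) (\sum_(i <- r | P i) G i).
Proof.
  move=> hFG; rewrite /cong -sumrB; apply: abs_sum_le => //; exact: abs_ge0.
Qed.

Lemma congMl m a x y : vring a -> cong m x y -> cong m (a * x) (a * y).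
Proof.
  move=> ha hxy; rewrite /cong -mulrBr mulrC.
  exact: Rle_trans (abs_mul_vring _ ha) hxy.
Qed.

Lemma cong_addr_multiple m x y : vring y -> cong m (x + m * y) x.
Proof. by move=> hy; rewrite /cong addrAC subrr add0r; exact: abs_mul_vring. Qed.

Lemma cong_dvd m d x y : vring d -> cong (m * d) x y -> cong m x y.
Proof. by move=> hd hxy; exact: Rle_trans hxy (abs_mul_vring _ hd). Qed.

(* Integral powers respect congruences, since x^n - y^n = (x - y) * (...). *)
Lemma congX m x y n : vring x -> vring y -> cong m x y -> cong m (x ^+ n) (y ^+ n).
Proof.
  move=> hx hy hxy; rewrite /cong subrXX; apply: Rle_trans (abs_mul_vring _ _) hxy.
  by apply: vring_sum => i _; apply: vringM; apply: vringX.
Qed.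

End Ultrametric.

(* The q-integer [x]_r as the geometric sum 1 + r + ... + r^(x-1); unlike
   qint it needs no case distinction at r = 1. *)
Definition qnum (K : fieldType) (r : K) (x : nat) : K := \sum_(i < x) r ^+ i.

Definition alt_qsum (K : fieldType) (r : K) (n k : nat) : K :=
  \sum_(x < k) (-1) ^+ x * qnum r x ^+ n.

Section QNumbers.
Variable K : fieldType.
Implicit Types r : K.

Lemma qnum_add r a k : qnum r (a + k) = qnum r a + r ^+ a * qnum r k.
Proof.
  rewrite /qnum big_split_ord /= mulr_sumr; congr (_ + _).
  by apply: eq_bigr => i _; rewrite exprD.
Qed.

Lemma qnum_mul r b c : qnum r (b * c) = qnum r b * qnum (r ^+ b) c.
Proof.
  elim: c => [|c IH]; first by rewrite muln0 /qnum !big_ord0 mulr0.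
  rewrite mulnS addnC qnum_add IH /qnum big_ord_recr /= mulrDr; congr (_ + _).
  by rewrite mulrC exprM.
Qed.

Lemma one_sub_exp r m : 1 - r ^+ m = (1 - r) * qnum r m.
Proof. by rewrite /qnum -opprB subrX1 -mulNr opprB. Qed.

Lemma qnum1 m : qnum (1 : K) m = m%:R.
Proof. by rewrite /qnum (eq_bigr (fun=> 1)) ?sumr_const ?card_ord // => i _; rewrite expr1n. Qed.

Lemma qint_qnum r x : qint r x = qnum r x.
Proof.
  rewrite /qint; case: eqP => [->|/eqP hr1]; first by rewrite qnum1.
  have h1r : 1 - r != 0 by rewrite subr_eq0 eq_sym.
  by rewrite one_sub_exp mulrAC divff ?mul1r.
Qed.

Lemma qnum2 r : qnum r 2 = 1 + r.
Proof. by rewrite /qnum !big_ord_recr big_ord0 /= add0r expr0 expr1. Qed.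

Lemma odd_succ_sign m : (odd m.+1)%:R = (odd m)%:R + (-1) ^+ m :> K.
Proof. by rewrite -signr_odd /=; case: (odd m); rewrite ?expr1 ?subrr ?add0r. Qed.

End QNumbers.

Section Periodicity.
Variables (K : fieldType) (abs : K -> R).
Hypothesis hU : is_ultra_abs abs.

Lemma vring_qnum r x : vring abs r -> vring abs (qnum r x).
Proof. by move=> hr; apply: (vring_sum hU) => i _; exact: (vringX hU). Qed.

(* For odd b, the alternating sum over [0, m b) is congruent modulo [b]_r to
   0 or to the sum over [0, b) according to the parity of m: the j-th block
   [j b, j b + b) contributes (-1)^j times the first block, because
   [j b + i]_r = [i]_r + [b]_r (r^i [j]_{r^b}) = [i]_r  (mod [b]_r). *)
Lemma alt_qsum_period r n b m : odd b -> vring abs r ->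
  cong abs (qnum r b) (alt_qsum r n (m * b)) ((odd m)%:R * alt_qsum r n b).
Proof.
  move=> hb hr; elim: m => [|m IH].
    by rewrite mul0n /alt_qsum big_ord0 mul0r; exact: (cong_refl hU).
  rewrite mulSnr /alt_qsum big_split_ord /= odd_succ_sign mulrDl.
  apply: (congD hU IH); rewrite mulr_sumr; apply: (cong_sum hU) => i _.
  have hsign : (-1) ^+ (m * b + i) = (-1) ^+ m * (-1) ^+ i :> K.
    by rewrite exprD -[(-1) ^+ (m * b)]signr_odd oddM hb andbT signr_odd.
  have hshift : qnum r (m * b + i) = qnum r i + qnum r b * (r ^+ i * qnum (r ^+ b) m).
    by rewrite addnC qnum_add mulnC qnum_mul mulrCA.
  rewrite hsign mulrA hshift; apply: (congMl hU).
    by apply: (vringM hU); apply: (vringX hU); exact: (vringN1 hU).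
  have hmult : vring abs (r ^+ i * qnum (r ^+ b) m).
    by apply: (vringM hU); [exact: (vringX hU) | apply: vring_qnum; exact: (vringX hU)].
  apply: (congX hU); last exact: (cong_addr_multiple hU).
  - by apply: (vringD hU); [exact: vring_qnum | apply: (vringM hU) => //; exact: vring_qnum].
  - exact: vring_qnum.
Qed.

End Periodicity.

Lemma qnum_binomial (K : fieldType) (r : K) k :
  qnum r k = \sum_(i < k) (r - 1) ^+ i *+ 'C(k, i.+1).
Proof.
  have [->|hr1] := eqVneq r 1.
    case: k => [|k]; first by rewrite qnum1 big_ord0.
    rewrite qnum1 subrr big_ord_recl expr0 bin1 big1 ?addr0 // => i _.
    by rewrite expr0n mul0rn.
  have ht : r - 1 != 0 by rewrite subr_eq0.
  apply: (mulfI ht); rewrite /qnum -subrX1 mulr_sumr.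
  have {1}-> : r = (r - 1) + 1 by rewrite subrK.
  rewrite exprD1n big_ord_recl expr0 bin0 addrAC subrr add0r.
  by apply: eq_bigr => i _; rewrite exprS mulrnAr.
Qed.

Section PAdicEstimates.
Variables (K : fieldType) (abs : K -> R).
Hypothesis hU : is_ultra_abs abs.
Variable p : nat.
Hypotheses (hp : prime p) (hodd : odd p).
Hypothesis hN : forall n : nat, (0 < n)%N -> abs (n%:R) = pow (Rinv (INR p)) (logn p n).

Lemma p_ge3 : (3 <= p)%N.
Proof. by case: p hp hodd => [|[|[|p']]]. Qed.

Lemma invp_bounds : Rlt R0 (Rinv (INR p)) /\ Rlt (Rinv (INR p)) R1.
Proof.
  have h3 : Rle (INR 3) (INR p) by apply: le_INR; apply/leP; exact: p_ge3.
  simpl in h3; have e : Rmult (Rinv (INR p)) (INR p) = R1 by field; lra.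
  have : Rlt R0 (Rinv (INR p)) by apply: Rinv_0_lt_compat; lra.
  split; nra.
Qed.

Lemma vring_nat m : vring abs (m%:R).
Proof.
  have [h1 h2] := invp_bounds.
  case: m => [|m]; first by rewrite /vring (abs0 hU); lra.
  by rewrite /vring hN //; apply: pow_le1; lra.
Qed.

Lemma abs_nat_dvd m : (p %| m)%N -> Rle (abs (m%:R)) (Rinv (INR p)).
Proof.
  have [h1 h2] := invp_bounds.
  case: m => [|m] hd; first by rewrite (abs0 hU); lra.
  rewrite hN //; apply: pow_le_base; first lra.
  by rewrite logn_gt0 mem_primes hp hd.
Qed.

Lemma abs2 : abs (2%:R) = R1.
Proof.
  rewrite hN // (_ : logn p 2 = 0%N) //; apply/eqP.
  rewrite -leqn0 leqNgt logn_gt0 mem_primes hp /=; apply/negP => hd.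
  by have := leq_trans p_ge3 (dvdn_leq (isT : (0 < 2)%N) hd).
Qed.

Lemma two_neq0 : (2%:R : K) != 0.
Proof. by apply/eqP => e; have := abs2; rewrite e (abs0 hU); lra. Qed.

(* If |1 - u| < 1 then 1 + u = 2 - (1 - u) is a unit of the valuation ring. *)
Lemma one_add_unit u : Rlt (abs (1 - u)) R1 -> 1 + u != 0 /\ vring abs (1 + u)^-1.
Proof.
  move=> hu; have e : (2%:R : K) = (1 + u) + (1 - u) by rewrite addrACA subrr addr0.
  have h2 := absD hU (1 + u) (1 - u); rewrite -e abs2 in h2.
  have h1 : Rle R1 (abs (1 + u)) by move: h2; rewrite /Rmax; case: Rle_dec; lra.
  have hnz : 1 + u != 0 by apply/eqP => e1; rewrite e1 (abs0 hU) in h1; lra.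
  split => //; rewrite /vring (absV hU hnz).
  have : Rmult (Rinv (abs (1 + u))) (abs (1 + u)) = R1 by field; lra.
  have : Rlt R0 (Rinv (abs (1 + u))) by apply: Rinv_0_lt_compat; lra.
  nra.
Qed.

(* The hypothesis of the theorem in the form used below:
   |1 - r|^(p-1) < 1/p, i.e. |1 - r| < p^(-1/(p-1)). *)
Definition near_one (r : K) : Prop := Rlt (pow (abs (1 - r)) p.-1) (Rinv (INR p)).

Lemma near_one_lt1 r : near_one r -> Rlt (abs (1 - r)) R1.
Proof.
  rewrite /near_one => h; have [h1 h2] := invp_bounds.
  case: (Rlt_le_dec (abs (1 - r)) R1) => [//|h3].
  by have := pow_R1_Rle _ p.-1 h3; lra.
Qed.

Lemma near_one_vring r : near_one r -> vring abs r.
Proof.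
  move=> h; rewrite /vring -[r]opprK -[- r](addKr 1) opprD opprK.
  apply: (absD_le hU); first by rewrite (abs1 hU); lra.
  by rewrite (absN hU); apply: Rlt_le; exact: near_one_lt1.
Qed.

(* |[p]_r| <= 1/p: in Newton's expansion every binomial C(p, i+1) with
   i + 1 < p is divisible by p, and the last term is (r - 1)^(p-1). *)
Lemma abs_qnum_p r : near_one r -> Rle (abs (qnum r p)) (Rinv (INR p)).
Proof.
  move=> hr; have [h1 h2] := invp_bounds.
  have ht1 : Rle (abs (r - 1)) R1 by rewrite (absB hU); apply: Rlt_le; exact: near_one_lt1.
  have ht0 := abs_ge0 hU (r - 1).
  rewrite qnum_binomial; apply: (abs_sum_le hU) => [|i _]; first lra.
  rewrite -mulr_natr (absM hU) (absX hU).
  case: (ltnP i.+1 p) => hip.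
  - have hC : Rle (abs ('C(p, i.+1))%:R) (Rinv (INR p)).
      by apply: abs_nat_dvd; apply: prime_dvd_bin; rewrite ?hip.
    have := pow_le1 i (conj ht0 ht1); have := pow_le (abs (r - 1)) i ht0.
    have := abs_ge0 hU ('C(p, i.+1))%:R; nra.
  - have ei : i.+1 = p by apply/eqP; rewrite eqn_leq ltn_ord hip.
    have ep : p.-1 = i by rewrite -[in LHS]ei.
    rewrite ei binn (abs1 hU) Rmult_1_r (absB hU) -ep.
    exact: Rlt_le.
Qed.

(* Since 1 - r^p = (1 - r) [p]_r, the hypothesis passes from r to r^p. *)
Lemma near_one_exp_p r : near_one r -> near_one (r ^+ p).
Proof.
  move=> hr; have [h1 h2] := invp_bounds.
  have hle : Rle (abs (1 - r ^+ p)) (abs (1 - r)).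
    rewrite one_sub_exp (absM hU); have := abs_qnum_p hr.
    have := abs_ge0 hU (1 - r); have := abs_ge0 hU (qnum r p); nra.
  apply: Rle_lt_trans hr; apply: pow_incr; split => //; exact: abs_ge0.
Qed.

(* |[p^N]_r| <= p^-N, by [p^(N+1)]_r = [p]_r [p^N]_{r^p}. *)
Lemma abs_qnum_pN N r : near_one r -> Rle (abs (qnum r (p ^ N))) (pow (Rinv (INR p)) N).
Proof.
  elim: N r => [|N IH] r hr.
    by rewrite expn0 /qnum big_ord1 expr0 (abs1 hU) /=; lra.
  rewrite expnS qnum_mul (absM hU) /=.
  have := abs_qnum_p hr; have := IH _ (near_one_exp_p hr).
  have := abs_ge0 hU (qnum r p); have := abs_ge0 hU (qnum (r ^+ p) (p ^ N)); nra.
Qed.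

End PAdicEstimates.

Lemma pow_lt_of_radius (p : nat) (a : R) : (3 <= p)%N -> Rle R0 a ->
  Rlt a (Rpower (INR p) (Ropp (Rinv (Rminus (INR p) R1)))) ->
  Rlt (pow a p.-1) (Rinv (INR p)).
Proof.
  move=> h3 ha hlt.
  have hI : Rle (INR 3) (INR p) by apply: le_INR; apply/leP.
  simpl in hI.
  have hpred : INR p.-1 = Rminus (INR p) R1.
    by rewrite -{2}(prednK (leq_trans (isT : (0 < 3)%N) h3)) S_INR; lra.
  have hradius : pow (Rpower (INR p) (Ropp (Rinv (Rminus (INR p) R1)))) p.-1 = Rinv (INR p).
    rewrite -Rpower_pow; last by apply: exp_pos.
    rewrite Rpower_mult hpred.
    have -> : Rmult (Ropp (Rinv (Rminus (INR p) R1))) (Rminus (INR p) R1) = Ropp R1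
      by field; lra.
    by rewrite Rpower_Ropp Rpower_1; lra.
  rewrite -hradius; apply: pow_lt_compat => //.
  by rewrite -subn1 subn_gt0; apply: leq_trans h3.
Qed.

Section UltrametricLimits.
Variables (K : fieldType) (abs : K -> R).
Hypothesis hU : is_ultra_abs abs.

Lemma telescope_bound (u : nat -> K) x N :
  Rle R0 x -> Rle x R1 -> (forall k, Rle (abs (u k.+1 - u k)) (pow x k)) ->
  forall d, Rle (abs (u (N + d)%N - u N)) (pow x N).
Proof.
  move=> hx0 hx1 hstep; elim => [|d IH].
    by rewrite addn0 subrr (abs0 hU); exact: pow_le.
  rewrite addnS -(subrKA (u (N + d)%N)); apply: (absD_le hU) => //.
  apply: Rle_trans (hstep _) _; rewrite pow_add.
  have := pow_le x N hx0; have := pow_le1 d (conj hx0 hx1); have := pow_le x d hx0; nra.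
Qed.

Lemma cauchy_of_geometric_steps (u : nat -> K) x :
  Rle R0 x -> Rlt x R1 -> (forall k, Rle (abs (u k.+1 - u k)) (pow x k)) ->
  cauchy_seq abs u.
Proof.
  move=> hx0 hx1 hstep eps heps.
  have [N0 hN0] := pow_lt_1_zero x ltac:(rewrite Rabs_pos_eq; lra) eps heps.
  have hsmall : Rlt (pow x N0) eps.
    by have := hN0 N0 (le_n _); rewrite Rabs_pos_eq //; exact: pow_le.
  exists N0 => m k hm hk.
  have hclose j : (N0 <= j)%N -> Rle (abs (u j - u N0)) (pow x N0).
    by move=> hj; rewrite -(subnKC hj); apply: telescope_bound => //; lra.
  apply: Rle_lt_trans hsmall; rewrite -(subrKA (u N0)) -[u N0 - u k]opprB.
  by apply: (absD_le hU); rewrite ?(absN hU); exact: hclose.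
Qed.

Lemma converges_scale_shift (u : nat -> K) L c : vring abs c ->
  converges_to abs u L -> converges_to abs (fun N => c * u N.+1) (c * L).
Proof.
  move=> hc hu eps heps; have [N0 hN0] := hu eps heps.
  exists N0 => N hN; rewrite -mulrBr mulrC.
  exact: Rle_lt_trans (abs_mul_vring hU _ hc) (hN0 _ (leqW hN)).
Qed.

Lemma cong_limit (u : nat -> K) L m a :
  converges_to abs u L -> (forall N, cong abs m (u N) a) -> cong abs m L a.
Proof.
  move=> hu hcong; apply: le_of_le_max_eps; first exact: abs_ge0.
  move=> e he; have [N0 hN0] := hu e he.
  rewrite /cong -(subrKA (u N0)); apply: (absD_le hU).
  - by rewrite (absB hU); apply: Rle_trans (Rmax_l _ _); apply: Rlt_le; exact: hN0.
  - exact: Rle_trans (hcong N0) (Rmax_r _ _).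
Qed.

End UltrametricLimits.

Section FermionicRiemannSums.
Variables (K : fieldType) (abs : K -> R).
Hypothesis hU : is_ultra_abs abs.
Variable p : nat.
Hypotheses (hp : prime p) (hodd : odd p).
Hypothesis hN : forall n : nat, (0 < n)%N -> abs (n%:R) = pow (Rinv (INR p)) (logn p n).
Variables (q : K) (n : nat).
Hypothesis hq : near_one abs p q.

Let c : K := 2%:R / qint q 2.
Let s : nat -> K := ferm_sum p q (qeuler_integrand q n).

Let odd_pN N : odd (p ^ N). Proof. by rewrite oddX hodd orbT. Qed.

(* Every power of q is close to 1: |1 - q^m| = |1 - q| |[m]_q| < 1. *)
Lemma abs_one_sub_exp_lt1 m : Rlt (abs (1 - q ^+ m)) R1.
Proof.
  have hq1 := near_one_lt1 hp hodd hq.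
  rewrite one_sub_exp (absM hU); have := vring_qnum hU m (near_one_vring hU hp hodd hq).
  rewrite /vring; have := abs_ge0 hU (1 - q); have := abs_ge0 hU (qnum q m); nra.
Qed.

Lemma one_add_exp_unit m : 1 + q ^+ m != 0 /\ vring abs (1 + q ^+ m)^-1.
Proof. exact: (one_add_unit hU hp hodd hN (abs_one_sub_exp_lt1 m)). Qed.

Lemma c_eq : c = 2%:R / (1 + q ^+ 1).
Proof. by rewrite /c qint_qnum qnum2 expr1. Qed.

Lemma c_neq0 : c != 0.
Proof.
  rewrite c_eq; apply: mulf_neq0; first exact: (two_neq0 hU hp hodd hN).
  by rewrite invr_eq0; exact: (one_add_exp_unit 1).1.
Qed.

Lemma vring_c : vring abs c.
Proof.
  rewrite c_eq; apply: (vringM hU); first exact: (vring_nat hU hp hodd hN).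
  exact: (one_add_exp_unit 1).2.
Qed.

Lemma vring_invc : vring abs c^-1.
Proof.
  rewrite c_eq invf_div; apply: (vringM hU).
    exact/(vringD hU (vring1 hU))/(vringX hU)/(near_one_vring hU hp hodd hq).
  by rewrite /vring (absV hU (two_neq0 hU hp hodd hN)) (abs2 hp hodd hN) Rinv_1; lra.
Qed.

(* Since p^N is odd, [p^N]_{-q} = (1 + q^(p^N)) / [2]_q, and the weights
   [x]_q^n q^-x (-q)^x are (-1)^x [x]_q^n; hence
   (2/[2]_q) s_N = 2/(1 + q^(p^N)) * sum_{x < p^N} (-1)^x [x]_q^n. *)
Lemma ferm_sum_alt N :
  c * s N = 2%:R / (1 + q ^+ (p ^ N)) * alt_qsum q n (p ^ N).
Proof.
  have [hnz1 _] := one_add_exp_unit 1.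
  have [hnzN _] := one_add_exp_unit (p ^ N).
  have hq0 : q != 0.
    by apply/eqP => e; have := abs_one_sub_exp_lt1 1; rewrite e expr1 subr0 (abs1 hU); lra.
  have hweight : qnint q (p ^ N) = (1 + q ^+ (p ^ N)) / (1 + q).
    by rewrite /qnint -[- q]mulN1r exprMn -signr_odd odd_pN expr1 mulN1r opprK.
  have hsum : \sum_(x < p ^ N) qeuler_integrand q n x * (- q) ^+ x = alt_qsum q n (p ^ N).
    apply: eq_bigr => x _; rewrite /qeuler_integrand qint_qnum -[- q]mulN1r exprMn.
    by rewrite mulrCA mulrA -mulrA divfK ?expf_neq0.
  rewrite expr1 in hnz1.
  by rewrite /s /ferm_sum hsum hweight invf_div c_eq expr1 !mulrA divfK.
Qed.

(* (2/[2]_q) s_N = sum_{x < p^N} (-1)^x [x]_q^n  (mod [p^N]_q), because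
   2/(1 + u) - 1 = (1 - u)/(1 + u) and 1 - q^(p^N) = (1 - q) [p^N]_q. *)
Lemma ferm_sum_cong N : cong abs (qnum q (p ^ N)) (c * s N) (alt_qsum q n (p ^ N)).
Proof.
  have [hnz hinv] := one_add_exp_unit (p ^ N).
  have hF : vring abs (alt_qsum q n (p ^ N)).
    apply: (vring_sum hU) => x _; apply: (vringM hU); first exact/(vringX hU)/(vringN1 hU).
    exact/(vringX hU)/(vring_qnum hU)/(near_one_vring hU hp hodd hq).
  have -> : c * s N = alt_qsum q n (p ^ N) +
      qnum q (p ^ N) * ((1 - q) * ((1 + q ^+ (p ^ N))^-1 * alt_qsum q n (p ^ N))).
    have htwo : 2%:R / (1 + q ^+ (p ^ N)) = 1 + (1 - q ^+ (p ^ N)) / (1 + q ^+ (p ^ N)).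
      apply: (mulIf hnz); rewrite divfK // mulrDl mul1r divfK //.
      by rewrite addrACA subrr addr0.
    by rewrite ferm_sum_alt htwo mulrDl mul1r one_sub_exp -!mulrA mulrCA.
  apply/(cong_addr_multiple hU)/(vringM hU); last exact: (vringM hU).
  exact: Rlt_le (near_one_lt1 hp hodd hq).
Qed.

Lemma alt_qsum_step N :
  cong abs (qnum q (p ^ N)) (alt_qsum q n (p ^ N.+1)) (alt_qsum q n (p ^ N)).
Proof.
  have := alt_qsum_period hU n p (odd_pN N) (near_one_vring hU hp hodd hq).
  by rewrite hodd mul1r -expnS.
Qed.

Lemma ferm_sum_step N : Rle (abs (s N.+1 - s N)) (pow (Rinv (INR p)) N).
Proof.
  apply: Rle_trans (abs_qnum_pN hU hp hodd hN N hq).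
  have hstep : cong abs (qnum q (p ^ N)) (c * s N.+1) (c * s N).
    apply: (cong_trans hU _ (cong_sym hU (ferm_sum_cong N))).
    apply: (cong_trans hU _ (alt_qsum_step N)).
    apply: (cong_dvd hU (d := qnum (q ^+ (p ^ N)) p)).
      exact/(vring_qnum hU)/(vringX hU)/(near_one_vring hU hp hodd hq).
    by rewrite -qnum_mul -expnSr; exact: ferm_sum_cong.
  rewrite -(mulKf c_neq0 (s N.+1 - s N)) mulrBr mulrC.
  exact: Rle_trans (abs_mul_vring hU _ vring_invc) hstep.
Qed.

Lemma ferm_sum_cauchy : cauchy_seq abs s.
Proof.
  have [h1 h2] := invp_bounds hp hodd.
  by apply: (cauchy_of_geometric_steps hU (x := Rinv (INR p))); [lra | lra | exact: ferm_sum_step].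
Qed.

(* The key congruence: (2/[2]_q) s_(N+1) = sum_{j < p} (-1)^j [j]_q^n (mod [p]_q),
   combining ferm_sum_cong with [p^(N+1)]_q = [p]_q [p^N]_(q^p) and the
   periodicity of the alternating sums with block length p. *)
Lemma ferm_sum_cong_p N : cong abs (qnum q p) (c * s N.+1) (alt_qsum q n p).
Proof.
  have hqv := near_one_vring hU hp hodd hq.
  apply: (cong_trans hU (y := alt_qsum q n (p ^ N.+1))).
    apply: (cong_dvd hU (d := qnum (q ^+ p) (p ^ N))).
      exact/(vring_qnum hU)/(vringX hU).
    by rewrite -qnum_mul -expnS; exact: ferm_sum_cong.
  have := alt_qsum_period hU n (p ^ N) hodd hqv.
  by rewrite odd_pN mul1r -expnSr.
Qed.

End FermionicRiemannSums.

Unset Implicit Arguments.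
Theorem theorem1 (p : nat) (K : closedFieldType) (abs : K -> R)
    (hp : prime p) (hodd : odd p) (hK : is_Cp p abs)
    (q : K) (hq : Rlt (abs (1 - q)) (Rpower (INR p) (Ropp (Rinv (Rminus (INR p) R1)))))
    (n : nat) :
  exists E : K,
    converges_to abs (ferm_sum p q (qeuler_integrand q n)) E /\
    Rle (abs (2%:R / qint q 2 * E - \sum_(j < p) (-1) ^+ j * qint q j ^+ n))
        (abs (qint q p)).
Proof.
  have [hU [hN [hcomplete _]]] := hK.
  have hnear : near_one abs p q.
    exact: pow_lt_of_radius (p_ge3 hp hodd) (abs_ge0 hU _) hq.
  have [E hE] := hcomplete _ (ferm_sum_cauchy hU hp hodd hN n hnear).
  exists E; split => //.
  have -> : \sum_(j < p) (-1) ^+ j * qint q j ^+ n = alt_qsum q n p.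
    by apply: eq_bigr => j _; rewrite qint_qnum.
  rewrite (qint_qnum q p).
  apply: (cong_limit hU (converges_scale_shift hU (vring_c hU hp hodd hN hnear) hE)).
  exact: ferm_sum_cong_p.
Qed.
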